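(* Let $f\in\omega^{\subset\omega}$, let $\Xi$ be a family of completions of $f$ which blocks at width $n_\Xi$, and let $U$ be a $2n_\Xi$-branching set of extensions of $f$. Then there is a $2$-branching set of extensions of $f$, $U^*\subseteq U\cap\Xi$, such that for every $g\in U^*$, $\Xi\upharpoonright g$ blocks at width $n_\Xi$ (as a family of completions of $g$).
   Context: $\omega^{\subset\omega}$ is the set of partial functions from $\omega$ to $\omega$ with finite domain. For $f\in\omega^{\subset\omega}$, an $n$-branching set of extensions of $f$ of length $k$ is defined by induction on $k$: of length $1$, it is a set $U$ of $n$ functions such that for some fixed $x\notin\operatorname{dom}(f)$ each $g\in U$ satisfies $f\subseteq g$ and $\operatorname{dom}(g)=\operatorname{dom}(f)\cup\{x\}$; if $U_0$ is an $n$-branching set of extensions of $f$ of length $k$ and for each $g\in U_0$, $U_g$ is an $n$-branching set of extensions of $g$ of length $1$, then $\bigcup_{g\in U_0}U_g$ is an $n$-branching set of extensions of $f$ of length $k+1$. An $n$-branching set of extensions is one of some length $k\geq1$. A family of completions of $f$ is a set $\Xi\subseteq\omega^{\subset\omega}$ such that every $g\in\Xi$ satisfies $f\subseteq g$, and if $g\in\Xi$ and $f\subseteq h\subseteq g$ then $h\in\Xi$. $\Xi$ blocks at width $n$ if every $n$-branching set of extensions of $f$ has nonempty intersection with $\Xi$. For $g\in\Xi$, $\Xi\upharpoonright g=\{h\in\Xi: g\subseteq h\}$. *)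

From mathcomp Require Import all_boot.
From mathcomp Require Export finmap.
Set Implicit Arguments. Unset Strict Implicit. Unset Printing Implicit Defensive.
Local Open Scope fset_scope.
Local Open Scope fmap_scope.

(* omega^{subset omega}: partial functions nat -> nat with finite domain. *)
Definition pfun := {fmap nat -> nat}.

Definition pf_sub (f g : pfun) : Prop :=
  forall x y, f.[? x] = Some y -> g.[? x] = Some y.

Definition one_step (n : nat) (f : pfun) (x : nat) (U : {fset pfun}) : Prop :=
  [/\ x \notin domf f, #|` U| = n &
      forall g, g \in U -> pf_sub f g /\ domf g = x |` domf f].

Inductive branching (n : nat) (f : pfun) : nat -> {fset pfun} -> Prop :=
| branching1 (x : nat) (U : {fset pfun}) :
    one_step n f x U -> branching n f 1 U
| branchingS (k : nat) (U0 : {fset pfun}) (Ug : pfun -> {fset pfun}) (U : {fset pfun}) :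
    branching n f k U0 ->
    (forall g, g \in U0 -> exists x, one_step n g x (Ug g)) ->
    (forall h, h \in U <-> exists2 g, g \in U0 & h \in Ug g) ->
    branching n f k.+1 U.

Definition is_branching (n : nat) (f : pfun) (U : {fset pfun}) : Prop :=
  exists k, 1 <= k /\ branching n f k U.

Definition completions (f : pfun) (Xi : pfun -> Prop) : Prop :=
  (forall g, Xi g -> pf_sub f g) /\
  (forall g h, Xi g -> pf_sub f h -> pf_sub h g -> Xi h).

Definition blocks (f : pfun) (Xi : pfun -> Prop) (n : nat) : Prop :=
  forall U, is_branching n f U -> exists g, g \in U /\ Xi g.

Definition restr (Xi : pfun -> Prop) (g : pfun) : pfun -> Prop :=
  fun h => Xi h /\ pf_sub g h.

(* A node g is good ([restr_blocking Xi n g]) when Xi contains g and Xi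
   restricted to g still blocks at width n.  Among the 2n children of a one-step
   extension of a node below which Xi blocks at width n, at least two are good:
   otherwise n children are bad, each bad child is the root of a branching set of
   extensions no extension of which lies in Xi, and after lengthening these to a
   common length and grafting them onto those n children one gets an n-branching
   set of extensions of the node missing Xi.  Applying this step by step along U,
   each time inside Xi restricted to the good node just reached, selects the
   required 2-branching subset. *)

From mathcomp Require Import all_boot finmap zify.
From Stdlib Require Import ClassicalEpsilon.
Local Open Scope fset_scope.
Local Open Scope fmap_scope.

Lemma pf_sub_refl f : pf_sub f f.
Proof. by []. Qed.

Lemma pf_sub_trans {f g h : pfun} : pf_sub f g -> pf_sub g h -> pf_sub f h.
Proof. by move=> fg gh x y /fg /gh. Qed.

Lemma pf_sub_dom_inj {g g' h : pfun} :
  pf_sub g h -> pf_sub g' h -> domf g = domf g' -> g = g'.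
Proof.
move=> gh g'h eq_dom; apply/fmapP => x.
case gx: g.[? x] => [y|].
  have : x \in domf g' by rewrite -eq_dom -fndSome gx.
  rewrite -fndSome; case g'x: g'.[? x] => [y'|] // _.
  by move: (gh _ _ gx); rewrite (g'h _ _ g'x) => -[->].
have xNg' : x \notin domf g' by rewrite -eq_dom -fndSome gx.
by rewrite not_fnd.
Qed.

Lemma exists_one_step (n : nat) (f : pfun) : exists V x, one_step n f x V.
Proof.
pose x := (\max_(i <- domf f) i).+1.
have xNf : x \notin domf f.
  by apply/negP => /(@leq_bigmax_seq _ _ xpredT id) /(_ isT); rewrite ltnn.
exists [fset f.[x <- i] | i in iota 0 n], x; split => //.
  rewrite card_in_imfset /= ?undup_id ?iota_uniq ?size_iota // => i j _ _.
  by move/(congr1 (fun g : pfun => g.[? x])); rewrite !fnd_set eqxx => -[].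
move=> g /imfsetP [i _ ->]; split; last exact: dom_setf.
move=> y v fy; rewrite fnd_set; case: eqP => // yx.
by move: fy; rewrite yx not_fnd.
Qed.

Lemma fset_choice (T : choiceType) (B : Type) (b0 : B) (A : {fset T}) (P : T -> B -> Prop) :
  (forall a, a \in A -> exists b, P a b) -> exists F, forall a, a \in A -> P a (F a).
Proof.
move=> AP; apply: (choice (fun a b => a \in A -> P a b)) => a.
by case: (boolP (a \in A)) => [/AP [b] | _]; [exists b | exists b0].
Qed.
Arguments fset_choice {T B} b0 {A P}.

Lemma exists_fsubset_card {T : choiceType} {A : {fset T}} {m} :
  m <= #|` A| -> exists2 B, B `<=` A & #|` B| = m.
Proof.
move=> le_mA; exists [fset x in take m A].
  by apply/fsubsetP => x; rewrite inE => /mem_take.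
by rewrite card_fseq undup_id ?take_uniq // size_takel.
Qed.

Lemma mem_bigfcup_seq (s : seq pfun) (W : pfun -> {fset pfun}) h :
  reflect (exists2 g, g \in s & h \in W g) (h \in \bigcup_(g <- s) W g).
Proof.
apply: (iffP (@bigfcupP _ _ s h W xpredT)) => [[g /andP [gs _]] | [g gs]];
  by exists g; rewrite ?gs.
Qed.

Lemma branching_union {n f k U0} {W : pfun -> {fset pfun}} :
  branching n f k U0 -> (forall g, g \in U0 -> exists x, one_step n g x (W g)) ->
  branching n f k.+1 (\bigcup_(g <- U0) W g).
Proof. by move=> BU0 HW; apply: branchingS BU0 HW _ => h; split => /mem_bigfcup_seq. Qed.

Lemma branching_gt0 {n f k U} : branching n f k U -> 0 < k.
Proof. by case. Qed.

Lemma branching_is_branching {n f k U} : branching n f k U -> is_branching n f U.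
Proof. by move=> B; exists k; split; first exact: branching_gt0 B. Qed.

Lemma branching1_one_step {n f U} : branching n f 1 U -> exists x, one_step n f x U.
Proof.
move: {-1}1 (erefl 1) => k k1 B; case: B k1 => [x {}U OS _ | {}k U0 Ug {}U B0 _ _ [k0]].
  by exists x.
by move: B0; rewrite -k0 => /branching_gt0.
Qed.

Lemma branching_union_inv {n f k U} : branching n f k.+2 U ->
  exists p : {fset pfun} * (pfun -> {fset pfun}),
    [/\ branching n f k.+1 p.1, (forall g, g \in p.1 -> exists x, one_step n g x (p.2 g))
      & U = \bigcup_(g <- p.1) p.2 g].
Proof.
move=> B; inversion B as [| ? U0 Ug ? B0 HUg HU]; exists (U0, Ug); split => //.
by apply/fsetP => h; apply/idP/mem_bigfcup_seq => /HU.
Qed.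

Lemma branching_sub {n f k U} : branching n f k U -> forall g, g \in U -> pf_sub f g.
Proof.
elim=> [x {}U [_ _ HU] g /HU [] // | {}k U0 Ug {}U _ IH HUg HU h /HU [g gU0 hUg]].
have [x [_ _ /(_ h hUg) [gh _]]] := HUg g gU0.
exact: pf_sub_trans (IH g gU0) gh.
Qed.

Definition avoids (Xi : pfun -> Prop) (W : {fset pfun}) :=
  forall w h, w \in W -> pf_sub w h -> ~ Xi h.

Lemma branching_avoids_succ {n Xi f k W} :
  branching n f k W -> avoids Xi W ->
  exists W', branching n f k.+1 W' /\ avoids Xi W'.
Proof.
move=> B avW.
have [E HE] := fset_choice fset0 (A := W) (fun g _ => exists_one_step n g).
exists (\bigcup_(g <- W) E g); split; first exact: branching_union.
move=> h h' /mem_bigfcup_seq [g gW hE] hh'.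
have [x [_ _ /(_ h hE) [gh _]]] := HE g gW.
exact: avW gW (pf_sub_trans gh hh').
Qed.

Lemma branching_avoids_leq {n Xi f k W} K :
  branching n f k W -> avoids Xi W -> k <= K ->
  exists W', branching n f K W' /\ avoids Xi W'.
Proof.
move=> B avW; elim: K => [|K IH]; first by rewrite leqNgt (branching_gt0 B).
rewrite leq_eqVlt => /orP [/eqP <- | /IH [W' [B' avW']]]; first by exists W.
exact: branching_avoids_succ B' avW'.
Qed.

Lemma avoiding_branchings_common_length {n Xi} {s : seq pfun} :
  (forall g, g \in s -> exists k W, branching n g k W /\ avoids Xi W) ->
  exists K, forall g, g \in s -> exists W, branching n g K.+1 W /\ avoids Xi W.
Proof.
elim: s => [|a s IH] Hs; first by exists 0.
have [K HK] : exists K, forall g, g \in s ->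
    exists W, branching n g K.+1 W /\ avoids Xi W.
  by apply: IH => g gs; apply: Hs; rewrite inE gs orbT.
have [k [W [Ba avWa]]] := Hs a (mem_head a s).
exists (maxn K k) => g; rewrite inE => /orP [/eqP -> | /HK [W' [B' avW']]].
  exact: branching_avoids_leq Ba avWa (leqW (leq_maxr K k)).
by apply: branching_avoids_leq B' avW' _; rewrite ltnS leq_maxl.
Qed.

Definition pairwise_incompatible (U : {fset pfun}) :=
  forall g g' h, g \in U -> g' \in U -> pf_sub g h -> pf_sub g' h -> g = g'.

Lemma one_step_incompatible {n f x V} : one_step n f x V -> pairwise_incompatible V.
Proof.
move=> [_ _ HV] g g' h /HV [_ dom_g] /HV [_ dom_g'] gh g'h.
by apply: pf_sub_dom_inj gh g'h _; rewrite dom_g dom_g'.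
Qed.

Lemma branching_graft {n f k m U0} {W : pfun -> {fset pfun}} :
  branching n f k U0 -> pairwise_incompatible U0 ->
  (forall g, g \in U0 -> branching n g m.+1 (W g)) ->
  branching n f (k + m.+1) (\bigcup_(g <- U0) W g).
Proof.
move=> BU0 incU0; elim: m W => [|m IH] W BW.
  by rewrite addn1; apply: branching_union BU0 _ => g /BW /branching1_one_step.
have [F HF] := fset_choice (fset0, fun=> fset0) (fun g gU0 => branching_union_inv (BW g gU0)).
(* The last levels of the grafted trees merge into one branching set: by
   incompatibility of U0, each of its members lies in the tree of one [parent]. *)
pose parent h := nth f U0 (find (fun g => h \in (F g).1) U0).
have parentP g h : g \in U0 -> h \in (F g).1 -> parent h = g.
  move=> gU0 hFg; have has_h : has (fun g => h \in (F g).1) U0 by apply/hasP; exists g.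
  have pU0 : parent h \in U0 by rewrite mem_nth // -has_find.
  have [Bp _ _] := HF _ pU0; have [Bg _ _] := HF _ gU0.
  exact: incU0 pU0 gU0 (branching_sub Bp _ (nth_find f has_h)) (branching_sub Bg _ hFg).
suff -> : \bigcup_(g <- U0) W g =
          \bigcup_(h <- \bigcup_(g <- U0) (F g).1) (F (parent h)).2 h.
  rewrite addnS; apply: branching_union => [|h /mem_bigfcup_seq [g gU0 hFg]].
    by apply: IH => g /HF [].
  by rewrite (parentP g h gU0 hFg); have [_ + _] := HF g gU0; apply.
apply/fsetP => w; apply/mem_bigfcup_seq/mem_bigfcup_seq.
  move=> [g gU0]; have [_ _ ->] := HF g gU0; move=> /mem_bigfcup_seq [h hFg wh].
  by exists h; [apply/mem_bigfcup_seq; exists g | rewrite (parentP g h gU0 hFg)].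
move=> [h /mem_bigfcup_seq [g gU0 hFg]]; rewrite (parentP g h gU0 hFg) => wh.
by exists g => //; have [_ _ ->] := HF g gU0; apply/mem_bigfcup_seq; exists h.
Qed.

Definition restr_blocking (Xi : pfun -> Prop) (n : nat) (g : pfun) :=
  Xi g /\ blocks g (restr Xi g) n.

Lemma completions_restr {f Xi g} : completions f Xi -> Xi g -> completions g (restr Xi g).
Proof.
move=> [Xi_ext Xi_down] Xig; split=> [h [] // | h h' [Xih gh] gh' h'h]; split=> //.
exact: Xi_down Xih (pf_sub_trans (Xi_ext g Xig) gh') h'h.
Qed.

Lemma blocks_mono {f} {P Q : pfun -> Prop} {n} :
  (forall h, P h -> Q h) -> blocks f P n -> blocks f Q n.
Proof. by move=> PQ blP U /blP [g [gU Pg]]; exists g; split; last exact: PQ. Qed.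

Lemma restr_blocking_restr {Xi n g h} :
  restr_blocking (restr Xi g) n h -> restr_blocking Xi n h.
Proof. by move=> [[Xih _] blh]; split=> //; apply: blocks_mono blh => w [[]]. Qed.

Lemma blocks_width_gt0 {f Xi n} : blocks f Xi n -> 0 < n.
Proof.
case: n => // bl0; have [V [x OS]] := exists_one_step 0 f.
have [g [gV _]] := bl0 V (ex_intro _ 1 (conj isT (branching1 OS))).
by case: OS => _ /cardfs0_eq V0 _; rewrite V0 in_fset0 in gV.
Qed.

Lemma completions_avoids {f Xi n g k W} : completions f Xi -> pf_sub f g ->
  branching n g k W -> (forall w, w \in W -> ~ Xi w) -> avoids Xi W.
Proof.
move=> [_ Xi_down] fg BW WNXi w h wW wh Xih; apply: (WNXi w wW).
exact: Xi_down Xih (pf_sub_trans fg (branching_sub BW w wW)) wh.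
Qed.

Lemma not_restr_blocking_avoids {f Xi} n {g} : completions f Xi -> pf_sub f g ->
  ~ restr_blocking Xi n g -> exists k W, branching n g k W /\ avoids Xi W.
Proof.
move=> Xi_compl fg notbl; apply: NNPP => noW; apply: notbl.
have [_ Xi_down] := Xi_compl.
have Xig : Xi g.
  apply: NNPP => NXig; apply: noW; have [V [x OS]] := exists_one_step n g.
  exists 1, V; split; first exact: branching1 OS.
  apply: (completions_avoids Xi_compl fg (branching1 OS)) => w wV Xiw; apply: NXig.
  exact: Xi_down _ _ Xiw fg (branching_sub (branching1 OS) w wV).
split=> //; move=> U [k [_ BU]].
apply: NNPP => NU; apply: noW; exists k, U; split=> //.
apply: (completions_avoids Xi_compl fg BU) => w wU Xiw; apply: NU.
by exists w; split=> //; split=> //; exact: branching_sub BU w wU.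
Qed.

Lemma one_step_sub {n f x V B} : one_step n f x V -> B `<=` V -> one_step #|` B| f x B.
Proof. by move=> [xNf _ HV] BV; split=> // g /(fsubsetP BV) /HV. Qed.

Lemma two_restr_blocking_successors {f Xi n x V} :
  completions f Xi -> blocks f Xi n -> one_step (n + n) f x V ->
  exists2 G, G `<=` V & one_step 2 f x G /\ forall g, g \in G -> restr_blocking Xi n g.
Proof.
move=> Xi_compl blXi OS; have n_gt0 := blocks_width_gt0 blXi.
pose Good := [fset g in V | excluded_middle_informative (restr_blocking Xi n g)].
have memGood g : reflect (g \in V /\ restr_blocking Xi n g) (g \in Good).
  rewrite inE; apply: (iffP andP) => -[gV rb]; split=> //.
  - by move/sumboolP: rb.
  - exact/sumboolP.
have GoodV : Good `<=` V by apply/fsubsetP => g /memGood [].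
have [le2 | lt2] := leqP 2 #|` Good|.
  have [G GGood cardG] := exists_fsubset_card le2.
  have GV := fsubset_trans GGood GoodV.
  exists G => //; split; first by rewrite -cardG; apply: one_step_sub OS GV.
  by move=> g /(fsubsetP GGood) /memGood [].
have [B BBad cardB] : exists2 B, B `<=` V `\` Good & #|` B| = n.
  have [_ cardV _] := OS.
  by apply: exists_fsubset_card; rewrite cardfsDS // cardV; lia.
have BV : B `<=` V := fsubset_trans BBad (fsubsetDl V Good).
have OSB : one_step n f x B by rewrite -cardB; apply: one_step_sub OS BV.
have Bbad g : g \in B -> exists k W, branching n g k W /\ avoids Xi W.
  move=> gB; have /fsetDP [gV gNGood] := fsubsetP BBad g gB.
  apply: not_restr_blocking_avoids Xi_compl _ _ => [|rbg].
    by have [_ _ /(_ g gV) []] := OS.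
  by move: gNGood => /memGood; apply; split.
have [K /(fset_choice fset0) [W HW]] := avoiding_branchings_common_length Bbad.
have BW := branching_graft (branching1 OSB) (one_step_incompatible OSB) (fun g gB => (HW g gB).1).
have [t [/mem_bigfcup_seq [g gB tW] Xit]] := blXi _ (branching_is_branching BW).
by have [_ avW] := HW g gB; case: (avW t t tW (pf_sub_refl t) Xit).
Qed.

Lemma branching2_restr_blocking_sub {f Xi n k U} :
  completions f Xi -> blocks f Xi n -> branching (n + n) f k U ->
  exists2 Us, branching 2 f k Us & forall g, g \in Us -> g \in U /\ restr_blocking Xi n g.
Proof.
move=> Xi_compl blXi; elim=> [x {}U OS | {}k U0 Ug {}U _ [Us0 BUs0 HUs0] HUg HU].
  have [G GU [OSG HG]] := two_restr_blocking_successors Xi_compl blXi OS.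
  by exists G => [|g gG]; [exact: branching1 OSG | split; [exact: fsubsetP GU g gG | exact: HG]].
have successors g : g \in Us0 -> exists G, G `<=` Ug g /\
    (exists x, one_step 2 g x G) /\ forall h, h \in G -> restr_blocking Xi n h.
  move=> gUs0; have [gU0 [Xig blg]] := HUs0 g gUs0; have [x OSg] := HUg g gU0.
  have [G GUg [OSG HG]] := two_restr_blocking_successors (completions_restr Xi_compl Xig) blg OSg.
  exists G; split=> //; split; first by exists x.
  by move=> h /HG /restr_blocking_restr.
have [F HF] := fset_choice fset0 successors.
exists (\bigcup_(g <- Us0) F g); first by apply: branching_union BUs0 _ => g /HF [_ []].
move=> h /mem_bigfcup_seq [g gUs0 hFg]; have [FUg [_ HFg]] := HF g gUs0.
split; last exact: HFg.
by apply/HU; exists g; [exact: (HUs0 g gUs0).1 | exact: fsubsetP FUg h hFg].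
Qed.

Theorem mainTheorem9 (f : pfun) (Xi : pfun -> Prop) (n : nat) (U : {fset pfun}) :
  completions f Xi ->
  blocks f Xi n ->
  is_branching (2 * n) f U ->
  exists Ustar : {fset pfun},
    [/\ is_branching 2 f Ustar,
        (forall g, g \in Ustar -> g \in U /\ Xi g) &
        (forall g, g \in Ustar ->
           completions g (restr Xi g) /\ blocks g (restr Xi g) n)].
Proof.
move=> Xi_compl blXi [k [_ BU]]; rewrite mul2n -addnn in BU.
have [Us BUs HUs] := branching2_restr_blocking_sub Xi_compl blXi BU.
exists Us; split; first exact: branching_is_branching BUs.
- by move=> g /HUs [gU [Xig _]].
- by move=> g /HUs [_ [Xig blg]]; split; first exact: completions_restr Xi_compl Xig.
Qed.
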